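(* Let $(T(\mathcal{A})=\mathcal{A}\oplus\mathcal{A}^*,\ast,\omega)$ be a double construction of symplectic antiassociative algebra associated to $\mathcal{A}$ and $\mathcal{A}^*$. Then the formulas $\omega(u\succ v,w)=\omega(v,w\ast u)$, $\omega(u\prec v,w)=\omega(u,v\ast w)$ ($u,v,w\in T(\mathcal{A})$) define a compatible antidendriform algebra structure on $(T(\mathcal{A}),\ast)$, and $\mathcal{A}$ and $\mathcal{A}^*$ are antidendriform subalgebras of $(T(\mathcal{A}),\succ,\prec)$.
   Context: An antiassociative algebra is a vector space with bilinear product satisfying $(x\ast y)\ast z=-x\ast(y\ast z)$. Let $\mathcal{A}$ be a finite-dimensional vector space. A double construction of symplectic antiassociative algebra associated to antiassociative algebras $\mathcal{A}$ and $\mathcal{A}^*$ (on the dual space) is an antiassociative product $\ast$ on $\mathcal{A}\oplus\mathcal{A}^*$ such that $\mathcal{A}$ and $\mathcal{A}^*$ are subalgebras (with their given products) and the non-degenerate skew-symmetric form $\omega(x+a^*,y+b^* )=-\langle x,b^*\rangle+\langle a^*,y\rangle$ satisfies $\omega(u\ast v,w)+\omega(v\ast w,u)+\omega(w\ast u,v)=0$ for all $u,v,w$. An antidendriform algebra is a vector space with bilinear products $\prec,\succ$ such that, with $x\star y=x\prec y+x\succ y$: $(x\prec y)\prec z=-x\prec(y\star z)$, $(x\succ y)\prec z=-x\succ(y\prec z)$, $x\succ(y\succ z)=-(x\star y)\succ z$; it is compatible with $\ast$ if $x\succ y+x\prec y=x\ast y$. *)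

From mathcomp Require Import all_boot all_algebra.
Set Implicit Arguments. Unset Strict Implicit. Unset Printing Implicit Defensive.
Import GRing.Theory.
Local Open Scope ring_scope.

(* The finite-dimensional space A is modelled as 'rV[K]_n, its dual A^* also
   as 'rV[K]_n, with the canonical pairing <x, a^*> = sum_i x_i a^*_i. *)
Definition pairing (K : fieldType) (n : nat) (x a : 'rV[K]_n) : K :=
  \sum_(i < n) x 0 i * a 0 i.

Definition TA (K : fieldType) (n : nat) := ('rV[K]_n * 'rV[K]_n)%type.

Definition omega (K : fieldType) (n : nat) (u v : TA K n) : K :=
  - pairing u.1 v.2 + pairing v.1 u.2.

Definition inA (K : fieldType) (n : nat) (x : 'rV[K]_n) : TA K n := (x, 0).
Definition inAs (K : fieldType) (n : nat) (a : 'rV[K]_n) : TA K n := (0, a).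

Definition bilinear_op (K : fieldType) (V : lmodType K) (f : V -> V -> V) :=
  (forall (c : K) (x y z : V), f (c *: x + y) z = c *: f x z + f y z) /\
  (forall (c : K) (x y z : V), f z (c *: x + y) = c *: f z x + f z y).

Definition antiassociative (T : Type) (opp : T -> T) (f : T -> T -> T) :=
  forall x y z, f (f x y) z = opp (f x (f y z)).

Definition antiassoc_alg (K : fieldType) (V : lmodType K) (f : V -> V -> V) :=
  bilinear_op f /\ antiassociative (fun v : V => - v) f.

Definition antidendriform (K : fieldType) (V : lmodType K)
    (succ prec : V -> V -> V) :=
  bilinear_op succ /\ bilinear_op prec /\
  let star x y := prec x y + succ x y in
  (forall x y z : V, prec (prec x y) z = - prec x (star y z)) /\
  (forall x y z : V, prec (succ x y) z = - succ x (prec y z)) /\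
  (forall x y z : V, succ x (succ y z) = - succ (star x y) z).

Definition double_construction (K : fieldType) (n : nat)
    (mulA mulAs : 'rV[K]_n -> 'rV[K]_n -> 'rV[K]_n) (mul : TA K n -> TA K n -> TA K n) :=
  antiassoc_alg mulA /\ antiassoc_alg mulAs /\ antiassoc_alg mul /\
  (forall x y, mul (inA x) (inA y) = inA (mulA x y)) /\
  (forall a b, mul (inAs a) (inAs b) = inAs (mulAs a b)) /\
  (forall u v w, omega (mul u v) w + omega (mul v w) u + omega (mul w u) v = 0).

From mathcomp Require Import all_boot all_algebra ring.
Set Implicit Arguments. Unset Strict Implicit.
Local Open Scope ring_scope.
Import GRing.Theory.

(* Since omega is a non-degenerate skew-symmetric bilinear form
   on the finite-dimensional space T(A), every linear form on T(A) is of the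
   shape omega(X, -) for a unique X (a Riesz-type representation).  Applying
   this to w |-> omega(v, w * u) and w |-> omega(u, v * w) defines u > v and
   u < v.  The antidendriform axioms, bilinearity and the compatibility
   u > v + u < v = u * v are then identities tested against omega(-, w):
   they follow from non-degeneracy, antiassociativity of * and the cyclic
   condition on omega.  Finally, A and A^* are
   Lagrangian for omega and are exactly their own orthogonals, so both are
   closed under > and < because they are subalgebras for *. *)

Definition linear_form (K : fieldType) (V : lmodType K) (f : V -> K) :=
  forall (c : K) (x y : V), f (c *: x + y) = c * f x + f y.

Section LinearForm.
Variables (K : fieldType) (V : lmodType K) (f : V -> K).
Hypothesis f_linear : linear_form f.

Lemma linear_form0 : f 0 = 0.
Proof. by have := f_linear (-1) 0 0; rewrite scaleN1r addNr mulN1r addNr. Qed.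

Lemma linear_formD : {morph f : x y / x + y}.
Proof. by move=> x y; rewrite -[x]scale1r f_linear mul1r scale1r. Qed.

Lemma linear_formZ (c : K) (x : V) : f (c *: x) = c * f x.
Proof. by rewrite -[c *: x]addr0 f_linear linear_form0 addr0. Qed.

End LinearForm.

Section AntidendriformFromSymplectic.
Variables (K : fieldType) (V : lmodType K) (b : V -> V -> K).
Hypothesis b_linear : forall u, linear_form (b u).
Hypothesis b_skew : forall u v, b u v = - b v u.
Hypothesis b_nondeg : forall u v, (forall w, b u w = b v w) -> u = v.

Variable mul : V -> V -> V.
Hypothesis mul_bilinear : bilinear_op mul.
Hypothesis mul_antiassoc : antiassociative (fun v => - v) mul.
Hypothesis mul_cyclic :
  forall u v w, b (mul u v) w + b (mul v w) u + b (mul w u) v = 0.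

Variables succ prec : V -> V -> V.
Hypothesis succ_adj : forall u v w, b (succ u v) w = b v (mul w u).
Hypothesis prec_adj : forall u v w, b (prec u v) w = b u (mul v w).

Lemma form_linear_l (c : K) (x y w : V) :
  b (c *: x + y) w = c * b x w + b y w.
Proof. by rewrite !(b_skew _ w) b_linear mulrN opprD. Qed.

Lemma formNr (u v : V) : b u (- v) = - b u v.
Proof. by rewrite -scaleN1r linear_formZ // mulN1r. Qed.

Lemma formNl (u v : V) : b (- u) v = - b u v.
Proof. by rewrite b_skew formNr opprK. Qed.

Lemma formDl (u v w : V) : b (u + v) w = b u w + b v w.
Proof. by rewrite -[u]scale1r form_linear_l mul1r scale1r. Qed.

(* Compatibility: the cyclic condition splits b(u * v, w) into the two
   adjoint terms. *)
Lemma succ_add_prec (u v : V) : succ u v + prec u v = mul u v.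
Proof.
apply: b_nondeg => w; rewrite formDl succ_adj prec_adj.
have := mul_cyclic u v w.
rewrite (b_skew (mul v w)) (b_skew (mul w u)) -addrA => /eqP.
by rewrite addr_eq0 => /eqP ->; rewrite opprD !opprK addrC.
Qed.

Lemma succ_bilinear : bilinear_op succ.
Proof.
have [mul_l mul_r] := mul_bilinear.
split=> c x y z; apply: b_nondeg => w; rewrite form_linear_l !succ_adj.
- by rewrite mul_r b_linear.
- by rewrite form_linear_l.
Qed.

Lemma prec_bilinear : bilinear_op prec.
Proof.
have [mul_l mul_r] := mul_bilinear.
split=> c x y z; apply: b_nondeg => w; rewrite form_linear_l !prec_adj.
- by rewrite form_linear_l.
- by rewrite mul_l b_linear.
Qed.

Lemma adjoints_antidendriform : antidendriform succ prec.
Proof.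
have star x y : prec x y + succ x y = mul x y by rewrite addrC succ_add_prec.
split; first exact: succ_bilinear.
split; first exact: prec_bilinear.
rewrite /=; split; [|split] => x y z; apply: b_nondeg => w.
- by rewrite star formNl !prec_adj mul_antiassoc formNr opprK.
- by rewrite formNl prec_adj !succ_adj prec_adj mul_antiassoc formNr.
- by rewrite star formNl !succ_adj mul_antiassoc formNr.
Qed.

End AntidendriformFromSymplectic.

Section OmegaOnTA.
Variables (K : fieldType) (n : nat).
Implicit Types (X Y w : TA K n) (x y a : 'rV[K]_n).

Lemma pairing_linear_l a : linear_form (fun x : 'rV[K]_n => pairing x a).
Proof.
move=> c x y; rewrite /pairing mulr_sumr -big_split /=.
by apply: eq_bigr => i _; rewrite !mxE mulrDl mulrA.
Qed.

Lemma pairing_linear_r x : linear_form (pairing x).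
Proof.
move=> c a a'; rewrite /pairing mulr_sumr -big_split /=.
by apply: eq_bigr => i _; rewrite !mxE mulrDr mulrCA.
Qed.

Lemma pairing_basis_r x i : pairing x 'e_i = x 0 i.
Proof.
rewrite /pairing (bigD1 i) //= big1 ?addr0 => [|j ji]; rewrite mxE.
  by rewrite !eqxx mulr1.
by rewrite (negbTE ji) mulr0.
Qed.

Lemma pairing_basis_l a i : pairing 'e_i a = a 0 i.
Proof.
rewrite /pairing (bigD1 i) //= big1 ?addr0 => [|j ji]; rewrite mxE.
  by rewrite !eqxx mul1r.
by rewrite (negbTE ji) mul0r.
Qed.

Lemma linear_form_pairing (g : 'rV[K]_n -> K) :
  linear_form g -> forall x, g x = pairing x (\row_i g 'e_i).
Proof.
move=> g_lin x; rewrite {1}(row_sum_delta x).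
rewrite (big_morph g (linear_formD g_lin) (linear_form0 g_lin)) /pairing.
by apply: eq_bigr => i _; rewrite linear_formZ // mxE.
Qed.

Lemma omega_skew X Y : omega X Y = - omega Y X.
Proof. by rewrite /omega opprD opprK addrC. Qed.

Lemma omega_linear X : linear_form (omega X).
Proof.
by move=> c Y Y'; rewrite /omega /= pairing_linear_r pairing_linear_l; ring.
Qed.

Lemma omega_inA_basis X i : omega X (inA 'e_i) = X.2 0 i.
Proof.
rewrite /omega /= pairing_basis_l /pairing big1 ?oppr0 ?add0r // => j _.
by rewrite mxE mulr0.
Qed.

Lemma omega_inAs_basis X i : omega X (inAs 'e_i) = - X.1 0 i.
Proof.
rewrite /omega /= pairing_basis_r /pairing big1 ?addr0 // => j _.
by rewrite mxE mul0r.
Qed.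

Lemma omega_nondeg X Y : (forall w, omega X w = omega Y w) -> X = Y.
Proof.
move=> eqXY; apply: injective_projections; apply/rowP => i.
  by apply: oppr_inj; rewrite -!omega_inAs_basis.
by rewrite -!omega_inA_basis.
Qed.

Definition omega_rep (f : TA K n -> K) : TA K n :=
  (\row_i - f (inAs 'e_i), \row_i f (inA 'e_i)).

Lemma omega_repP (f : TA K n -> K) :
  linear_form f -> forall w, omega (omega_rep f) w = f w.
Proof.
move=> f_lin [y a].
have split_w : (y, a) = inA y + inAs a :> TA K n.
  by rewrite /inA /inAs; congr pair; rewrite ?addr0 ?add0r.
have inA_lin : linear_form (fun x => f (inA x)).
  by move=> c x x'; rewrite -f_lin /inA; congr f; congr pair; rewrite /= scaler0 addr0.
have inAs_lin : linear_form (fun x => f (inAs x)).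
  by move=> c x x'; rewrite -f_lin /inAs; congr f; congr pair; rewrite /= scaler0 addr0.
rewrite {2}split_w (linear_formD f_lin) (linear_form_pairing inA_lin).
rewrite (linear_form_pairing inAs_lin) /omega /= addrC; congr (_ + _).
rewrite /pairing -sumrN; apply: eq_bigr => i _.
by rewrite !mxE mulNr opprK mulrC.
Qed.

Lemma omega_inA x y : omega (inA x) (inA y) = 0.
Proof.
by rewrite /omega /pairing /= !big1 ?oppr0 ?addr0 // => i _; rewrite mxE ?mulr0.
Qed.

Lemma omega_inAs a a' : omega (inAs a) (inAs a') = 0.
Proof.
by rewrite /omega /pairing /= !big1 ?oppr0 ?addr0 // => i _; rewrite mxE ?mul0r.
Qed.

Lemma orthogonal_inA X : (forall y, omega X (inA y) = 0) -> X = inA X.1.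
Proof.
move=> orthX; apply: injective_projections => //=; apply/rowP => i.
by rewrite -omega_inA_basis orthX mxE.
Qed.

Lemma orthogonal_inAs X : (forall a, omega X (inAs a) = 0) -> X = inAs X.2.
Proof.
move=> orthX; apply: injective_projections => //=; apply/rowP => i.
by apply: oppr_inj; rewrite -omega_inAs_basis orthX mxE oppr0.
Qed.

End OmegaOnTA.

Unset Implicit Arguments.

Theorem mainTheorem12 (K : fieldType) (n : nat)
    (mulA mulAs : 'rV[K]_n -> 'rV[K]_n -> 'rV[K]_n)
    (mul : TA K n -> TA K n -> TA K n) :
  double_construction mulA mulAs mul ->
  exists succ prec : TA K n -> TA K n -> TA K n,
    (forall u v w, omega (succ u v) w = omega v (mul w u)) /\
    (forall u v w, omega (prec u v) w = omega u (mul v w)) /\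
    antidendriform succ prec /\
    (forall u v, succ u v + prec u v = mul u v) /\
    (forall x y, exists z t, succ (inA x) (inA y) = inA z /\ prec (inA x) (inA y) = inA t) /\
    (forall a b, exists c d, succ (inAs a) (inAs b) = inAs c /\ prec (inAs a) (inAs b) = inAs d).
Proof.
move=> [_ [_ [[[mul_l mul_r] mul_antiassoc] [mul_inA [mul_inAs mul_cyclic]]]]].
pose succ u v := omega_rep (fun w => omega v (mul w u)).
pose prec u v := omega_rep (fun w => omega u (mul v w)).
have succ_adj u v w : omega (succ u v) w = omega v (mul w u).
  by apply: omega_repP => c a b; rewrite mul_l omega_linear.
have prec_adj u v w : omega (prec u v) w = omega u (mul v w).
  by apply: omega_repP => c a b; rewrite mul_r omega_linear.
have nondeg := @omega_nondeg K n; have skew := @omega_skew K n.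
exists succ, prec; do 2![split=> //]; split.
  exact: (adjoints_antidendriform (@omega_linear K n) skew nondeg
            (conj mul_l mul_r) mul_antiassoc mul_cyclic succ_adj prec_adj).
split; first exact: (succ_add_prec (@omega_linear K n) skew nondeg mul_cyclic).
split=> x y.
  exists (succ (inA x) (inA y)).1, (prec (inA x) (inA y)).1.
  by split; apply: orthogonal_inA => z;
    rewrite ?succ_adj ?prec_adj mul_inA omega_inA.
exists (succ (inAs x) (inAs y)).2, (prec (inAs x) (inAs y)).2.
by split; apply: orthogonal_inAs => z;
  rewrite ?succ_adj ?prec_adj mul_inAs omega_inAs.
Qed.
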